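(* Let $U=\{1,2,\dots,N\}$ be a finite population of unit labels and let $\underline{\theta}=(y_1,\dots,y_N)\in\mathbb{R}^N$ be the unknown population parameter vector, where $y_i$ is the response of unit $i$. Let $\delta_1,\dots,\delta_T$ be finitely many candidate sampling designs, and for each $k$ let $\hat\phi_{k,1},\dots,\hat\phi_{k,V_k}$ be finitely many candidate estimators accompanying $\delta_k$; the pair (design $\delta_k$, estimator $\hat\phi_{k,j}$) is called the strategy $\Lambda_{k,j}$. A strategy $\Lambda_{k,j}$ is first selected at random with probability $P(\Lambda_{k,j})$, and then an ordered sample $\underline{s}$ of unit labels (in order of selection, repeats allowed) is drawn with design $\delta_k$. Assume: (i) the probabilities $P(\Lambda_{k,j})$ do not depend on $\underline{\theta}$; (ii) every candidate design is of the conventional and/or adaptive type, i.e. for every ordered sample $\underline{s}$ and every strategy $\Lambda_{k,j}$, $P(\underline{s}\mid \underline{\theta},\Lambda_{k,j})=P(\underline{s}\mid \underline{y}_{\underline{s}},\delta_k)$, where $\underline{y}_{\underline{s}}$ is the vector of responses of the units in $\underline{s}$ (so the selection probability depends on $\underline{\theta}$ only through the responses of the sampled units; for a conventional design it does not depend on $\underline{\theta}$ at all). The observed data is $D_0=d_0=(\Lambda_{k,j},((i,y_i): i\in\underline{s}))$, so that $P_{\underline{\theta}}(D_0=d_0)=P(\Lambda_{k,j})\,P(\underline{s}\mid \underline{y}_{\underline{s}},\delta_k)\,I[\underline{\theta}\text{ is consistent with } d_0]$. Let $D_R=r_d(D_0)=\{(i,y_i): i\in s\}$ be the reduced data, where $s$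 is the unordered set of distinct labels appearing in $\underline{s}$. Then $D_R$ is a minimal sufficient statistic for $\underline{\theta}$.
   Context: A parameter vector $\underline{\theta}=(y_1,\dots,y_N)$ is consistent with data $d_R=\{(i,y_i'): i\in s\}$ (or with $d_0$) if for every sampled label $i$ the recorded response equals the $i$-th component of $\underline{\theta}$; $\Theta_{d_R}$ denotes the set of such $\underline{\theta}$. The strategy selected is recorded as part of the observed data $d_0$. Minimal sufficiency is in the usual sense for the family of distributions of $D_0$ indexed by $\underline{\theta}\in\mathbb{R}^N$. *)

From HB Require Import structures.
From mathcomp Require Import all_boot all_order all_algebra.
From mathcomp Require Import all_classical all_reals.
From mathcomp Require Import esum.
Set Implicit Arguments. Unset Strict Implicit. Unset Printing Implicit Defensive.
Import Order.TTheory GRing.Theory Num.Theory.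
Local Open Scope classical_set_scope.
Local Open Scope ring_scope.

(* A family of discrete distributions of a random datum X (values in the
   choiceType X) indexed by Theta, given by its probability mass function
   f th x = P_th(X = x). *)
Section Stat.
Variables (R : realType) (Theta : Type) (X : choiceType) (f : Theta -> X -> R).

Definition Prob (th : Theta) (A : set X) : \bar R := \esum_(x in A) (f th x)%:E.

Definition in_support (x : X) : Prop := exists th, f th x <> 0.

(* T is sufficient (usual sense, discrete case): the conditional distribution
   P_th(X = x | T(X) = T(x)) does not depend on th, i.e. equals some k(x)
   for every th with P_th(T(X) = T(x)) > 0. *)
Definition sufficient (Y : Type) (T : X -> Y) : Prop :=
  exists k : X -> R, forall th x,
    Prob th [set x' | T x' = T x] != 0%E ->
    (f th x)%:E = ((k x)%:E * Prob th [set x' | T x' = T x])%E.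

Definition minimal_sufficient (Y : Type) (T : X -> Y) : Prop :=
  sufficient T /\
  forall (Z : Type) (U : X -> Z), sufficient U ->
    exists g : Z -> Y, forall x, in_support x -> T x = g (U x).
End Stat.

(* strategies Lambda_{k,j}: k : 'I_T indexes the design delta_k,
   j : 'I_(V k) indexes the estimator phi_{k,j} *)
Definition strategy (T : nat) (V : 'I_T -> nat) := {k : 'I_T & 'I_(V k)}.

Definition design_of (T : nat) (V : 'I_T -> nat) (l : strategy V) : 'I_T := tag l.

Definition consistent (R : realType) (N : nat) (th : 'I_N -> R)
  (d : seq ('I_N * R)) : bool := all (fun z => z.2 == th z.1) d.

(* the observed data D_0 = (Lambda_{k,j}, ((i, y_i) : i in ordered sample)) *)
Definition obs_data (R : realType) (N T : nat) (V : 'I_T -> nat) :=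
  (strategy V * seq ('I_N * R))%type.

Definition D0pmf (R : realType) (N T : nat) (V : 'I_T -> nat)
  (PL : strategy V -> R) (p : ('I_N -> R) -> strategy V -> seq 'I_N -> R)
  (th : 'I_N -> R) (d0 : obs_data R N V) : R :=
  PL d0.1 * p th d0.1 (map fst d0.2) * (consistent th d0.2)%:R.

(* reduced data D_R = r_d(D_0) = {(i, y_i) : i in s}, s the set of distinct
   labels of the ordered sample (the strategy and the order/multiplicity
   are dropped) *)
Definition reduce (R : realType) (N T : nat) (V : 'I_T -> nat)
  (d0 : obs_data R N V) : set ('I_N * R) := [set z | z \in d0.2].

From HB Require Import structures.
From mathcomp Require Import all_boot all_order all_algebra.
From mathcomp Require Import all_classical all_reals.
From mathcomp Require Import finmap esum ereal lra.
Set Implicit Arguments. Unset Strict Implicit. Unset Printing Implicit Defensive.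
Import Order.TTheory GRing.Theory Num.Theory.
Local Open Scope classical_set_scope.
Local Open Scope ring_scope.

(* Under (i) and (ii), P_th(D_0 = d_0) = w(d_0) * [the pairs recorded in d_0 lie
   on the graph of th], and that indicator depends on d_0 only through
   D_R = r_d(d_0): by the factorization criterion D_R is sufficient.
   Conversely, on the support the set of th with P_th(d_0) > 0 is the set of th
   whose graph contains D_R, and it determines D_R, because changing th at a
   label absent from D_R keeps it consistent.  Any sufficient statistic U
   determines that set, since P_th(d_0) = k(d_0) P_th(U = U(d_0)), so D_R is a
   function of U. *)

Lemma esumZl (R : realType) (T : choiceType) (S : set T) (a : T -> \bar R) (r : R) :
  0 <= r -> (forall x, (0 <= a x)%E) ->
  \esum_(x in S) (r%:E * a x)%E = (r%:E * \esum_(x in S) a x)%E.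
Proof.
move=> r_ge0 a_ge0; rewrite /esum -ereal_supZl //; last first.
  by apply/set0P; exists 0%E, set0; [exact: fsets_set0 | rewrite fsbig_set0].
rewrite image_comp; congr ereal_sup; apply: eq_imagel => A _ /=.
by rewrite ge0_mule_fsumr.
Qed.

Lemma esum_fintype (R : realType) (I : finType) (F : I -> R) :
  (forall i, 0 <= F i) -> \esum_(i in [set: I]) (F i)%:E = (\sum_i F i)%:E.
Proof.
move=> F_ge0; rewrite esum_fset => [|//|i _]; [|exact: finite_finset|by rewrite lee_fin].
rewrite (fsbigTE (seq_fset tt (enum I))) => [|i]; last by rewrite seq_fsetE mem_enum.
by rewrite (perm_big _ (seq_fset_perm _ _)) undup_id ?enum_uniq // big_enum sumEFin.
Qed.

Section DiscreteModel.
Variables (R : realType) (Theta : Type) (X : choiceType) (f : Theta -> X -> R).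
Hypothesis f_ge0 : forall th x, 0 <= f th x.

Lemma le_Prob th (A : set X) x : A x -> ((f th x)%:E <= Prob f th A)%E.
Proof.
move=> Ax; apply: esum_ge; exists [set x]; last by rewrite fsbig_set1.
by split; [exact: finite_set1 | move=> y ->].
Qed.

Lemma Prob_neq0 th (A : set X) x : A x -> f th x != 0 -> Prob f th A != 0%E.
Proof.
move=> Ax; apply: contraNneq => PA0; apply/eqP/le_anti; rewrite f_ge0 andbT.
by rewrite -lee_fin (le_trans (le_Prob th Ax)) ?PA0.
Qed.

Lemma le_Prob_setT th (A : set X) : (Prob f th A <= Prob f th setT)%E.
Proof.
rewrite /Prob [leLHS]esum_mkcond; apply: le_esum => x _.
by case: ifP => _ //; rewrite lee_fin.
Qed.

Lemma factorization_sufficient (Y : Type) (T : X -> Y) (h : X -> R)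
    (g : Theta -> Y -> R) :
  (forall th, Prob f th setT < +oo)%E ->
  (forall x, 0 <= h x) -> (forall th y, 0 <= g th y) ->
  (forall th x, f th x = h x * g th (T x)) -> sufficient f T.
Proof.
move=> Pfin h_ge0 g_ge0 fE.
pose H x := \esum_(x' in [set x' | T x' = T x]) (h x')%:E.
have PE th x : Prob f th [set x' | T x' = T x] = ((g th (T x))%:E * H x)%E.
  rewrite /Prob -esumZl ?g_ge0 //.
  by apply: eq_esum => x' /= Tx'; rewrite fE Tx' EFinM muleC.
exists (fun x => h x / fine (H x)) => th x P_neq0.
have [g_neq0 H_neq0] : g th (T x) != 0 /\ H x != 0%E.
  by move: P_neq0; rewrite PE mule_eq0 negb_or eqe => /andP[].
have H_fin : H x \is a fin_num.
  rewrite ge0_fin_numE ?esum_ge0 // => [|x' _]; last by rewrite lee_fin.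
  rewrite ltey; apply/eqP => H_oo.
  have := le_lt_trans (le_Prob_setT th [set x' | T x' = T x]) (Pfin th).
  by rewrite PE H_oo gt0_muley ?ltxx // lte_fin lt0r g_neq0 g_ge0.
rewrite PE muleA -(fineK H_fin) -!EFinM fineK // fE; congr (_%:E).
by rewrite mulrAC divfK // -eqe fineK.
Qed.

Lemma sufficient_support (Y : Type) (U : X -> Y) th x x' :
  sufficient f U -> in_support f x' -> U x' = U x ->
  f th x != 0 -> f th x' != 0.
Proof.
move=> [k kE] [th' /eqP fx'_neq0] Ux'x fx_neq0.
pose C := [set y | U y = U x'].
have P_neq0 : Prob f th C != 0%E by apply: (Prob_neq0 (x := x)) => //; rewrite /C /= Ux'x.
have Px'_neq0 := Prob_neq0 (A := C) erefl fx'_neq0.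
have k_neq0 : k x' != 0.
  by apply: contraNneq fx'_neq0 => kx'0; rewrite -eqe (kE th' x' Px'_neq0) kx'0 mul0e.
by rewrite -eqe (kE th x' P_neq0) mule_eq0 negb_or eqe k_neq0.
Qed.

Lemma minimal_sufficient_of_support (Y : Type) (T : X -> Y) (y0 : Y) :
  sufficient f T ->
  (forall x x', in_support f x -> in_support f x' ->
     (forall th, f th x != 0 <-> f th x' != 0) -> T x = T x') ->
  minimal_sufficient f T.
Proof.
move=> suffT T_supp; split => // Z U suffU.
pose g z := if pselect (exists x, in_support f x /\ U x = z) is left ex
  then T (proj1_sig (cid ex)) else y0.
exists g => x sx; rewrite /g; case: pselect => [ex|[]]; last by exists x.
case: (cid ex) => x' [sx' Ux'x] /=; apply: T_supp => // th.
by split; apply: sufficient_support suffU _ _ => //; rewrite Ux'x.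
Qed.
End DiscreteModel.

Section Consistency.
Variables (R : realType) (N : nat).
Implicit Types (th : 'I_N -> R) (d : seq ('I_N * R)) (s : seq 'I_N).

Lemma consistent_graph th s : consistent th [seq (i, th i) | i <- s].
Proof. by elim: s => //= i s ->; rewrite eqxx. Qed.

Lemma graph_labels th d : consistent th d -> [seq (i, th i) | i <- map fst d] = d.
Proof. by elim: d => //= -[i y] d IH /andP[/eqP /= -> /IH ->]. Qed.

Lemma consistentE th d :
  consistent th d = `[< [set z | z \in d] `<=` range (fun i => (i, th i)) >].
Proof.
apply/allP/asboolP => [d_th z /d_th /eqP z2|d_th z /d_th [i _ <-] //=].
by exists z.1 => //; rewrite -z2 -surjective_pairing.
Qed.

Lemma consistent_subset th0 d d' : consistent th0 d ->
  (forall th, consistent th d -> consistent th d') -> {subset d' <= d}.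
Proof.
move=> d_th0 d_d' [i y] iy_in.
pose th j := if j \in map fst d then th0 j else y + 1.
have d_th : consistent th d.
  apply/allP => -[j w] jw_in /=; rewrite /th (map_f fst jw_in).
  exact: (allP d_th0 _ jw_in).
have /eqP/= := allP (d_d' th d_th) _ iy_in; rewrite /th.
case: ifPn => [/mapP[[j w] jw_in /= ->] ->|_]; last by lra.
by have /eqP/= <- := allP d_th0 _ jw_in.
Qed.
End Consistency.

Section SamplingModel.
Variables (R : realType) (N T : nat) (V : 'I_T -> nat) (PL : strategy V -> R).
Hypotheses (PL_ge0 : forall l, 0 <= PL l) (PL_sum1 : \sum_(l : strategy V) PL l = 1).
Variable p : ('I_N -> R) -> strategy V -> seq 'I_N -> R.
Hypotheses (p_ge0 : forall th l s, 0 <= p th l s)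
  (p_sum1 : forall th l, (\esum_(s in [set: seq 'I_N]) (p th l s)%:E = 1)%E).
Variable q : 'I_T -> seq ('I_N * R) -> R.
Hypothesis hii : forall th l s, p th l s = q (design_of l) [seq (i, th i) | i <- s].

Let f := D0pmf PL p.

Lemma D0pmf_ge0 th x : 0 <= f th x.
Proof. by rewrite /f /D0pmf !mulr_ge0. Qed.

(* [q] is unconstrained on data that no parameter is consistent with; the
   absolute value keeps the weight nonnegative there, where it is multiplied
   by 0 anyway. *)
Definition D0weight (x : obs_data R N V) := `|PL x.1 * q (design_of x.1) x.2|.

Lemma D0pmfE th x : f th x = D0weight x * (consistent th x.2)%:R.
Proof.
rewrite /f /D0pmf /D0weight; case: (boolP (consistent th x.2)) => [c|_]; last first.
  by rewrite !mulr0.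
by rewrite !mulr1 -{2}(graph_labels c) -hii ger0_norm ?mulr_ge0.
Qed.

Lemma D0pmf_neq0 th x : in_support f x -> (f th x != 0) = consistent th x.2.
Proof.
move=> [th0]; rewrite !D0pmfE => /eqP; rewrite mulf_eq0 negb_or => /andP[w_neq0 _].
by rewrite mulf_eq0 negb_or w_neq0; case: consistent; rewrite ?oner_eq0 ?eqxx.
Qed.

Lemma in_support_consistent x : in_support f x -> exists th, consistent th x.2.
Proof.
move=> [th]; rewrite D0pmfE.
by case: (boolP (consistent _ _)) => [|_]; [exists th | rewrite mulr0].
Qed.

Lemma Prob_D0pmf_setT th : Prob f th setT = 1%E.
Proof.
pose e (z : strategy V * seq 'I_N) : obs_data R N V :=
  (z.1, [seq (i, th i) | i <- z.2]).
have fst_e z : map fst (e z).2 = z.2 by rewrite -map_comp map_id.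
have e_inj : set_inj setT e.
  by move=> [l s] [l' s'] _ _ [-> /(congr1 (map fst))]; rewrite -!map_comp !map_id => ->.
have f_out x : ~ range e x -> f th x = 0.
  move=> x_out; rewrite D0pmfE; case: (boolP (consistent _ _)) => [c|_]; last by rewrite mulr0.
  by case: x_out; exists (x.1, map fst x.2) => //; rewrite /e /= graph_labels -?surjective_pairing.
rewrite /Prob (esumID (range e)) => [|x _]; last by rewrite lee_fin D0pmf_ge0.
rewrite [X in (_ + X)%E]esum1 ?adde0 => [|x [_ /f_out ->] //].
rewrite setTI esum_image //.
transitivity (\esum_(z in [set: strategy V * seq 'I_N])
               ((PL z.1)%:E * (p th z.1 z.2)%:E)%E).
  apply: eq_esum => z _.
  by rewrite /f /D0pmf fst_e consistent_graph mulr1 EFinM.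
have -> : [set: strategy V * seq 'I_N] = [set: strategy V] `*`` (fun=> setT).
  by apply/seteqP; split.
rewrite -(esum_esum (a := fun l s => ((PL l)%:E * (p th l s)%:E)%E)) => [|l s _ _]; last first.
  by rewrite -EFinM lee_fin mulr_ge0.
transitivity (\esum_(l in [set: strategy V]) (PL l)%:E).
  by apply: eq_esum => l _; rewrite esumZl ?p_sum1 ?mule1 // => s; rewrite lee_fin.
by rewrite esum_fintype // PL_sum1.
Qed.

Lemma reduce_eq_of_support x x' : in_support f x -> in_support f x' ->
  (forall th, f th x != 0 <-> f th x' != 0) -> reduce x = reduce x'.
Proof.
move=> sx sx' same_support.
have cE th : consistent th x.2 <-> consistent th x'.2.
  by rewrite -!D0pmf_neq0.
have [th0 c0] := in_support_consistent sx.
have [th0' c0'] := in_support_consistent sx'.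
apply/seteqP; split => z /=.
  by apply: (consistent_subset c0') => th /cE.
by apply: (consistent_subset c0) => th /cE.
Qed.
End SamplingModel.

Theorem mainTheorem1 (R : realType) (N T : nat) (V : 'I_T -> nat)
  (PL : strategy V -> R)
  (PL_ge0 : forall l, 0 <= PL l) (PL_sum1 : \sum_(l : strategy V) PL l = 1)
  (p : ('I_N -> R) -> strategy V -> seq 'I_N -> R)
  (p_ge0 : forall th l s, 0 <= p th l s)
  (p_sum1 : forall th l, (\esum_(s in [set: seq 'I_N]) (p th l s)%:E = 1)%E)
  (q : 'I_T -> seq ('I_N * R) -> R)
  (hii : forall th l s, p th l s = q (design_of l) [seq (i, th i) | i <- s]) :
  minimal_sufficient (D0pmf PL p) (@reduce R N T V).
Proof.
have f_ge0 := D0pmf_ge0 PL_ge0 p_ge0.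
apply: (minimal_sufficient_of_support f_ge0 set0).
  apply: (factorization_sufficient f_ge0 (h := D0weight PL q)
    (g := fun th S => (`[< S `<=` range (fun i => (i, th i)) >])%:R)).
  - by move=> th; rewrite (Prob_D0pmf_setT PL_ge0 PL_sum1 p_ge0 p_sum1 hii) ltry.
  - by move=> x; exact: normr_ge0.
  - by move=> th S; case: asboolP.
  - by move=> th x; rewrite (D0pmfE PL_ge0 p_ge0 hii) consistentE.
exact: (reduce_eq_of_support PL_ge0 p_ge0 hii).
Qed.
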